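(* Let $\lambda_1,\lambda_2>0$ and $\nu\in(0,1)$. Define, for $\theta\in\mathbb{R}$, $$\Psi^{(1)}_{\nu,\underline{\lambda}}(\theta):=\begin{cases}(\lambda_1(e^\theta-1))^{1/\nu} & \text{if } \theta\geq0,\\ (\lambda_2(e^{-\theta}-1))^{1/\nu} & \text{if } \theta<0,\end{cases}$$ $$\Psi^{(2)}_{\nu,\underline{\lambda}}(\theta):=\begin{cases}(\lambda_1(e^\theta-1)+\lambda_2(e^{-\theta}-1))^{1/\nu} & \text{if } \lambda_1(e^\theta-1)+\lambda_2(e^{-\theta}-1)\geq0,\\ 0 & \text{otherwise},\end{cases}$$ and for $k\in\{1,2\}$ let $I^{(k)}_{\mathrm{LD}}(x):=\sup_{\theta\in\mathbb{R}}\{\theta x-\Psi^{(k)}_{\nu,\underline{\lambda}}(\theta)\}$. Then $I^{(1)}_{\mathrm{LD}}(0)=I^{(2)}_{\mathrm{LD}}(0)=0$ and, for every $x\neq0$, $I^{(2)}_{\mathrm{LD}}(x)>I^{(1)}_{\mathrm{LD}}(x)>0$.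
   Context: In the paper, $I^{(1)}_{\mathrm{LD}}$ is the large deviation rate function (speed $t$) of $Y(t)/t$, where $Y(t)=N_{\nu,\lambda_1}(t)-N_{\nu,\lambda_2}(t)$ is a difference of two independent fractional Poisson processes with the same $\nu$, and $I^{(2)}_{\mathrm{LD}}$ is the rate function of $Z(t)/t$, where $Z(t)=S(L_\nu(t))$ with $S$ a difference of two independent Poisson processes with intensities $\lambda_1,\lambda_2$ and $L_\nu$ an independent inverse $\nu$-stable subordinator. The claim concerns only the functions defined explicitly above. *)

From mathcomp Require Import all_boot all_order all_algebra.
From mathcomp Require Import all_classical all_reals all_analysis.
Set Implicit Arguments. Unset Strict Implicit. Unset Printing Implicit Defensive.
Import Order.TTheory GRing.Theory Num.Theory.
Local Open Scope ring_scope.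
Local Open Scope classical_set_scope.

Definition Psi1 (R : realType) (nu l1 l2 theta : R) : R :=
  if 0 <= theta then powR (l1 * (expR theta - 1)) (1 / nu)
  else powR (l2 * (expR (- theta) - 1)) (1 / nu).

Definition Psi2 (R : realType) (nu l1 l2 theta : R) : R :=
  let a := l1 * (expR theta - 1) + l2 * (expR (- theta) - 1) in
  if 0 <= a then powR a (1 / nu) else 0.

Definition legendre (R : realType) (Psi : R -> R) (x : R) : \bar R :=
  ereal_sup [set ((theta * x - Psi theta)%R)%:E | theta in [set: R]].

Definition ILD1 (R : realType) (nu l1 l2 : R) : R -> \bar R :=
  legendre (Psi1 nu l1 l2).
Definition ILD2 (R : realType) (nu l1 l2 : R) : R -> \bar R :=
  legendre (Psi2 nu l1 l2).

(* Both Psi's are nonnegative and vanish at 0, so both transforms vanish at 0.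
   Since 1/nu > 1, Psi1 is o(theta) at 0, so theta x - Psi1 theta > 0 for small
   theta of the sign of x, whence I1(x) > 0.  Superadditivity of y |-> y^(1/nu)
   yields a uniform gap Psi2 + E <= Psi1 on every region |theta| >= m > 0, while
   on |theta| < m the quantity theta x - Psi1 theta stays below m |x|, which is
   less than I1(x) when m is small; hence I1(x) <= I2(x) - E.  Finiteness of
   I2(x) comes from the exponential growth of Psi2. *)

From mathcomp Require Import all_boot all_order all_algebra.
From mathcomp Require Import all_classical all_reals all_analysis.
From mathcomp Require Import ring lra.
Import Order.TTheory GRing.Theory Num.Theory.
Set Implicit Arguments. Unset Strict Implicit.
Local Open Scope ring_scope.

Section PowR.
Variable R : realType.
Implicit Types a b e p q y z d : R.

Lemma powR_ge_subr1 y p : 0 <= y -> 1 <= p -> y - 1 <= y `^ p.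
Proof.
move=> y0 p1; have [y1|y1] := leP 1 y.
  by apply: le_trans (le1r_powR y1 p1); lra.
by apply: le_trans (powR_ge0 _ _); lra.
Qed.

Lemma powR_superadditive a b p : 0 <= a -> 0 <= b -> 1 <= p ->
  a `^ p + b `^ p <= (a + b) `^ p.
Proof.
move=> a0 b0 p1; have p0 : 0 < p by lra.
have le_ab c : 0 <= c -> c <= a + b -> c `^ (p - 1) <= (a + b) `^ (p - 1).
  by move=> c0 cab; apply: ge0_ler_powR; rewrite ?nnegrE //; lra.
rewrite -!(mulr_powRB1 _ p0) ?addr_ge0 // mulrDl.
by apply: lerD; apply: ler_wpM2l => //; apply: le_ab => //; lra.
Qed.

Lemma powR_posD_le a b e p : 0 <= e -> e <= a - b -> e <= a -> 1 <= p ->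
  (if 0 <= b then b `^ p else 0) + e `^ p <= a `^ p.
Proof.
move=> e0 eab ea p1; case: ifPn => [b0|_]; last first.
  by rewrite add0r; apply: ge0_ler_powR; rewrite ?nnegrE //; lra.
apply: le_trans (powR_superadditive b0 e0 p1) _.
by apply: ge0_ler_powR; rewrite ?nnegrE ?addr_ge0 //; lra.
Qed.

Lemma exists_powR_lt q z d : 0 < q -> 0 < z -> 0 < d ->
  exists v, [/\ 0 < v, v <= d & v `^ q < z].
Proof.
move=> q0 z0 d0; set w := (z / 2) `^ q^-1.
have w0 : 0 < w by rewrite powR_gt0 ?divr_gt0.
exists (Num.min d w); split; first by rewrite lt_min d0.
  by rewrite ge_min lexx.
have wq : w `^ q = z / 2 by rewrite -powRrM mulVf ?gt_eqF // powRr1 // divr_ge0 // ltW.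
apply: le_lt_trans (_ : w `^ q < z); last by rewrite wq; lra.
by apply: ge0_ler_powR; rewrite ?nnegrE ?ge_min ?lexx ?orbT // ?ltW // lt_min d0.
Qed.

End PowR.

Section Exp.
Variable R : realType.
Implicit Types u : R.

Lemma expR_subr1_le2 u : 0 <= u -> u <= 1 / 2 -> expR u - 1 <= 2 * u.
Proof.
move=> u0 u12; have eu0 := expR_gt0 u.
have eu_bound : expR u * (1 - u) <= 1.
  rewrite -[leRHS](expRxMexpNx_1 u); apply: ler_wpM2l; first exact: ltW.
  by have := expR_ge1Dx (- u); lra.
have eu2 : expR u <= 2.
  have : expR u * (1 / 2) <= expR u * (1 - u) by apply: ler_wpM2l; lra.
  lra.
have : u * expR u <= u * 2 by exact: ler_wpM2l.
lra.
Qed.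

Lemma expR_subr1_ge_sqr u : 0 <= u -> u ^+ 2 / 2 <= expR u - 1.
Proof. by move=> u0; have := expR_ge1Dxn 1 u0; rewrite [2`!%:R]/=; lra. Qed.

End Exp.

Section Psi.
Variable R : realType.

Lemma Psi1_oppr (nu l1 l2 t : R) : Psi1 nu l1 l2 (- t) = Psi1 nu l2 l1 t.
Proof.
rewrite /Psi1 oppr_ge0 opprK; case: (ltgtP t 0) => [t0|t0|->] //.
by rewrite oppr0 expR0 subrr !mulr0.
Qed.

Lemma Psi2_oppr (nu l1 l2 t : R) : Psi2 nu l1 l2 (- t) = Psi2 nu l2 l1 t.
Proof. by rewrite /Psi2 opprK addrC. Qed.

Lemma Psi1_ge0 (nu l1 l2 t : R) : 0 <= Psi1 nu l1 l2 t.
Proof. by rewrite /Psi1; case: ifP => _; exact: powR_ge0. Qed.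

Lemma Psi2_ge0 (nu l1 l2 t : R) : 0 <= Psi2 nu l1 l2 t.
Proof. by rewrite /Psi2; case: ifP => _ //; exact: powR_ge0. Qed.

Lemma Psi1_at0 (nu l1 l2 : R) : nu != 0 -> Psi1 nu l1 l2 0 = 0.
Proof.
by move=> nu0; rewrite /Psi1 lexx expR0 subrr mulr0 powR0 // div1r invr_eq0.
Qed.

Lemma Psi2_at0 (nu l1 l2 : R) : nu != 0 -> Psi2 nu l1 l2 0 = 0.
Proof.
move=> nu0; rewrite /Psi2 oppr0 expR0 subrr !mulr0 addr0 lexx.
by rewrite powR0 // div1r invr_eq0.
Qed.

Lemma Psi2_linear_bound_ge0 (nu l1 l2 x t : R) : 0 < l1 -> 0 <= l2 -> 1 <= 1 / nu ->
  0 <= t -> t * x - Psi2 nu l1 l2 t <= (x + l2) ^+ 2 / (2 * l1) + 1.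
Proof.
move=> l10 l20 p1 t0; rewrite /Psi2.
set a := l1 * (expR t - 1) + l2 * (expR (- t) - 1).
have a_le : a - 1 <= (if 0 <= a then a `^ (1 / nu) else 0).
  by case: ifPn => [a0|]; [exact: powR_ge_subr1 | rewrite -ltNge; lra].
have a_ge : l1 * (t ^+ 2 / 2) - l2 * t <= a.
  have := expR_ge1Dx (- t); have := expR_subr1_ge_sqr t0.
  rewrite /a; nra.
have square : t * (x + l2) - l1 * (t ^+ 2 / 2) <= (x + l2) ^+ 2 / (2 * l1).
  have sq0 : 0 <= (x + l2 - l1 * t) ^+ 2 / (2 * l1).
    by rewrite divr_ge0 ?sqr_ge0 // mulr_ge0 // ltW.
  have sq_id : (x + l2 - l1 * t) ^+ 2 / (2 * l1)
             = (x + l2) ^+ 2 / (2 * l1) - (t * (x + l2) - l1 * (t ^+ 2 / 2)).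
    by field; rewrite gt_eqF.
  lra.
lra.
Qed.

Lemma Psi2_linear_bound (nu l1 l2 x : R) : 0 < l1 -> 0 < l2 -> 1 <= 1 / nu ->
  exists K, forall t, t * x - Psi2 nu l1 l2 t <= K.
Proof.
move=> l10 l20 p1.
have K1 : 0 <= (x + l2) ^+ 2 / (2 * l1) by rewrite divr_ge0 ?sqr_ge0 // mulr_ge0 // ltW.
have K2 : 0 <= (- x + l1) ^+ 2 / (2 * l2) by rewrite divr_ge0 ?sqr_ge0 // mulr_ge0 // ltW.
exists ((x + l2) ^+ 2 / (2 * l1) + (- x + l1) ^+ 2 / (2 * l2) + 1) => t.
have [t0|t0] := leP 0 t.
  by have := Psi2_linear_bound_ge0 x l10 (ltW l20) p1 t0; lra.
have nt0 : 0 <= - t by rewrite oppr_ge0 ltW.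
have := Psi2_linear_bound_ge0 (- x) l20 (ltW l10) p1 nt0.
by rewrite -Psi2_oppr opprK mulrNN; lra.
Qed.

Lemma Psi2_gap_Psi1_ge0 (nu l1 l2 m t : R) : 0 <= l1 -> 0 <= l2 -> 1 <= 1 / nu ->
  0 < m -> m <= t ->
  Psi2 nu l1 l2 t + (Num.min l1 l2 * (1 - expR (- m))) `^ (1 / nu) <= Psi1 nu l1 l2 t.
Proof.
move=> l10 l20 p1 m0 mt; rewrite /Psi1 /Psi2 (ltW (lt_le_trans m0 mt)).
set k := Num.min l1 l2; set d := 1 - expR (- m); set d' := 1 - expR (- t).
have k0 : 0 <= k by rewrite le_min l10 l20.
have d0 : 0 <= d by rewrite subr_ge0 expR_le1 oppr_le0 ltW.
have dd' : d <= d' by rewrite lerD2l lerN2 ler_expR lerN2.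
have d'_le : d' <= expR t - 1.
  by have := expR_ge1Dx t; have := expR_ge1Dx (- t); rewrite /d'; lra.
have kd_l1 : k * d <= l1 * d' by apply: ler_pM => //; rewrite ge_min lexx.
have kd_l2 : k * d <= l2 * d' by apply: ler_pM => //; rewrite ge_min lexx orbT.
apply: powR_posD_le => //; first exact: mulr_ge0.
  by rewrite /d' in kd_l2; lra.
by apply: le_trans kd_l1 _; apply: ler_wpM2l.
Qed.

Lemma Psi2_gap_Psi1 (nu l1 l2 m t : R) : 0 <= l1 -> 0 <= l2 -> 1 <= 1 / nu ->
  0 < m -> m <= `|t| ->
  Psi2 nu l1 l2 t + (Num.min l1 l2 * (1 - expR (- m))) `^ (1 / nu) <= Psi1 nu l1 l2 t.
Proof.
move=> l10 l20 p1 m0; have [t0|t0] := leP 0 t.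
  by rewrite ger0_norm // => mt; exact: Psi2_gap_Psi1_ge0.
rewrite ltr0_norm // => mt; rewrite -[t]opprK Psi1_oppr Psi2_oppr minC.
exact: Psi2_gap_Psi1_ge0.
Qed.

Lemma Psi1_lt_linear_ge0 (nu l1 l2 y : R) : 0 < l1 -> 1 < 1 / nu -> 0 < y ->
  exists2 t, 0 < t & Psi1 nu l1 l2 t < t * y.
Proof.
move=> l10 p1 y0; set p := 1 / nu.
have [|||v [v0 vl1 vp]] := @exists_powR_lt _ (p - 1) (y / (2 * l1)) l1 => //.
- by rewrite subr_gt0.
- by rewrite divr_gt0 // mulr_gt0.
have l1_2 : 0 < 2 * l1 by rewrite mulr_gt0.
set t := v / (2 * l1); have t0 : 0 < t by rewrite divr_gt0.
exists t => //; rewrite /Psi1 (ltW t0) -/p.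
have t12 : t <= 1 / 2 by rewrite ler_pdivrMr //; lra.
have e_le : l1 * (expR t - 1) <= v.
  have -> : v = l1 * (2 * t) by rewrite /t; field; rewrite gt_eqF.
  by rewrite ler_pM2l // expR_subr1_le2 // ltW.
have e0 : 0 <= l1 * (expR t - 1).
  by apply: mulr_ge0; [exact: ltW | have := expR_ge1Dx t; lra].
have p0 : 0 < p by rewrite /p; lra.
have v_ge0 := ltW v0.
apply: le_lt_trans (ge0_ler_powR (ltW p0) _ _ e_le) _; rewrite ?nnegrE //.
rewrite -(mulr_powRB1 v_ge0 p0).
have -> : t * y = v * (y / (2 * l1)) by rewrite /t; field; rewrite gt_eqF.
by rewrite ltr_pM2l.
Qed.

Lemma Psi1_lt_linear (nu l1 l2 x : R) : 0 < l1 -> 0 < l2 -> 1 < 1 / nu -> x != 0 ->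
  exists t, 0 < t * x - Psi1 nu l1 l2 t.
Proof.
move=> l10 l20 p1; case: (ltgtP x 0) => // x0 _.
  have nx0 : 0 < - x by rewrite oppr_gt0.
  have [t t0 ht] := Psi1_lt_linear_ge0 l1 l20 p1 nx0.
  by exists (- t); rewrite Psi1_oppr mulNr; rewrite mulrN in ht; lra.
have [t t0 ht] := Psi1_lt_linear_ge0 l2 l10 p1 x0.
by exists t; lra.
Qed.

End Psi.

Section Legendre.
Variable R : realType.
Implicit Types (Phi Psi : R -> R) (x t K : R).

Lemma legendre_ubound Psi x t : ((t * x - Psi t)%:E <= legendre Psi x)%E.
Proof. by apply: ereal_sup_ubound; exists t. Qed.

Lemma ge_legendre Psi x K :
  (forall t, t * x - Psi t <= K) -> (legendre Psi x <= K%:E)%E.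
Proof. by move=> PsiK; apply: ge_ereal_sup => _ [t _ <-]; rewrite lee_fin. Qed.

Lemma legendre0 Psi : (forall t, 0 <= Psi t) -> Psi 0 = 0 -> legendre Psi 0 = 0%E.
Proof.
move=> Psi_ge0 Psi0; apply/eqP; rewrite eq_le; apply/andP; split.
  by apply: ge_legendre => t; rewrite mulr0 sub0r oppr_le0.
by have := legendre_ubound Psi 0 0; rewrite mulr0 Psi0 subr0.
Qed.

Lemma legendre_gt0 Psi x : (exists t, 0 < t * x - Psi t) -> (0 < legendre Psi x)%E.
Proof. by move=> [t t_gt0]; apply: lt_le_trans (legendre_ubound Psi x t). Qed.

Lemma legendre_lt Phi Psi x : (forall t, 0 <= Phi t) ->
  (exists K, forall t, t * x - Psi t <= K) ->
  (forall m, 0 < m -> exists2 E, 0 < E & forall t, m <= `|t| -> Psi t + E <= Phi t) ->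
  (exists t, 0 < t * x - Phi t) ->
  (legendre Phi x < legendre Psi x)%E.
Proof.
move=> Phi_ge0 [K PsiK] gap [t0 c_gt0]; set c := t0 * x - Phi t0 in c_gt0.
have tx t : t * x <= `|t| * `|x| by rewrite -normrM ler_norm.
have x_gt0 : 0 < `|x|.
  rewrite normr_gt0; apply: contraTneq c_gt0 => x0.
  by rewrite /c x0 mulr0 sub0r oppr_gt0 -leNgt.
set m := c / `|x|; have m_gt0 : 0 < m by rewrite divr_gt0.
have mx : m * `|x| = c by rewrite divfK // gt_eqF.
have m_le : m <= `|t0|.
  by rewrite ler_pdivrMr //; have := tx t0; have := Phi_ge0 t0; rewrite /c; lra.
have [E E_gt0 gapE] := gap m m_gt0.
have Psi_fin : legendre Psi x \is a fin_num.
  rewrite fin_numElt (lt_le_trans (ltNyr _) (legendre_ubound Psi x t0)) /=.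
  exact: le_lt_trans (ge_legendre PsiK) (ltry _).
set r := fine (legendre Psi x).
have r_ub t : t * x - Psi t <= r by rewrite -lee_fin /r fineK ?legendre_ubound.
rewrite -(fineK Psi_fin) -/r; apply: (@le_lt_trans _ _ (r - E)%:E).
  apply: ge_legendre => t; have [tm|mt] := ltP `|t| m.
    have : `|t| * `|x| <= m * `|x| by rewrite ler_pM2r // ltW.
    have := tx t; have := Phi_ge0 t; have := gapE t0 m_le; have := r_ub t0.
    by rewrite mx /c; lra.
  by have := gapE t mt; have := r_ub t; lra.
by rewrite lte_fin; lra.
Qed.

End Legendre.

Theorem proposition5p2 (R : realType) (l1 l2 nu : R)
  (hl1 : 0 < l1) (hl2 : 0 < l2) (hnu0 : 0 < nu) (hnu1 : nu < 1) :
  ILD1 nu l1 l2 0 = 0%E /\ ILD2 nu l1 l2 0 = 0%E /\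
  (forall x : R, x != 0 ->
     (ILD1 nu l1 l2 x < ILD2 nu l1 l2 x)%E /\ (0 < ILD1 nu l1 l2 x)%E).
Proof.
have p_gt1 : 1 < 1 / nu by rewrite ltr_pdivlMr // mul1r.
have p_ge1 := ltW p_gt1.
have nu_neq0 : nu != 0 by rewrite gt_eqF.
split; first exact: legendre0 (Psi1_ge0 nu l1 l2) (Psi1_at0 _ _ nu_neq0).
split; first exact: legendre0 (Psi2_ge0 nu l1 l2) (Psi2_at0 _ _ nu_neq0).
move=> x x_neq0; have Psi1_pos := Psi1_lt_linear hl1 hl2 p_gt1 x_neq0.
split; last exact: legendre_gt0.
apply: legendre_lt => //; first exact: Psi1_ge0.
  exact: Psi2_linear_bound.
move=> m m_gt0; exists ((Num.min l1 l2 * (1 - expR (- m))) `^ (1 / nu)).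
  rewrite powR_gt0 // mulr_gt0 ?lt_min ?hl1 //.
  by rewrite subr_gt0 expR_lt1 oppr_lt0.
by move=> t; apply: Psi2_gap_Psi1; rewrite ?ltW.
Qed.
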